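(* Let $p$ be an odd prime and $k\in\mathbb{N}$. Then $\Delta_D(H_3(\mathbb{Z}/p^k\mathbb{Z}))^*$ is disconnected if and only if $k=1$.
   Context: $H_3(\mathbb{Z}/p^k\mathbb{Z})=\langle y_1,y_2,w\mid [y_1,y_2]=w,\ y_1^{p^k}=y_2^{p^k}=w^{p^k}=[y_1,w]=[y_2,w]=e\rangle$ for an odd prime $p$. The deep commuting graph $\Delta_D(G)$ has vertex set $G$, distinct vertices adjacent iff their preimages commute in a Schur cover $\tilde G$ of $G$ (a central extension $\{e\}\to M(G)\to\tilde G\to G\to\{e\}$ with kernel contained in $Z(\tilde G)\cap[\tilde G,\tilde G]$, of maximal order; $M(G)$ the Schur multiplier). A vertex is dominant if adjacent to every other vertex; the reduced graph $\Gamma^*$ is the subgraph induced by the non-dominant vertices. *)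

From HB Require Import structures.
From mathcomp Require Import all_boot all_order all_algebra all_fingroup all_solvable.
From mathcomp Require Import ring.
Set Implicit Arguments. Unset Strict Implicit. Unset Printing Implicit Defensive.
Import GRing.Theory.

(* This is the group of upper unitriangular 3x3 matrices over Z/nZ, with    *)
(* y1 = (1,0,0), y2 = (0,1,0), w = (0,0,1) (w = [y1,y2] up to sign, which   *)
(* does not matter for the isomorphism type).                               *)

Definition heis (n : nat) : Type := ('Z_n * 'Z_n * 'Z_n)%type.

Section Heis.
Variable n : nat.
Local Open Scope ring_scope.

HB.instance Definition _ := Finite.copy (heis n) ('Z_n * 'Z_n * 'Z_n)%type.

Definition heis_mul (x y : heis n) : heis n :=
  let: (a, b, c) := x in let: (a', b', c') := y in
  (a + a', b + b', c + c' + a * b').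
Definition heis_one : heis n := (0, 0, 0).
Definition heis_inv (x : heis n) : heis n :=
  let: (a, b, c) := x in (- a, - b, - c + a * b).

Lemma heis_mulA : associative heis_mul.
Proof. by move=> [[a b] c] [[a' b'] c'] [[a'' b''] c''] /=; congr (_, _, _); ring. Qed.
Lemma heis_mul1 : left_id heis_one heis_mul.
Proof. by move=> [[a b] c] /=; congr (_, _, _); ring. Qed.
Lemma heis_mulV : left_inverse heis_one heis_inv heis_mul.
Proof. by move=> [[a b] c] /=; congr (_, _, _); ring. Qed.

HB.instance Definition _ :=
  Finite_isGroup.Build (heis n) heis_mulA heis_mul1 heis_mulV.
End Heis.

Definition H3 (p k : nat) : finGroupType := heis (p ^ k).

Local Open Scope group_scope.

Definition stem_extension (gT hT : finGroupType) (G : {set gT})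
    (f : {morphism [set: hT] >-> gT}) : Prop :=
  f @* [set: hT] = G /\
  'ker f \subset 'Z([set: hT]) :&: [~: [set: hT], [set: hT]].

(* A Schur cover: a stem extension whose kernel has maximal order among all *)
(* stem extensions of G (the kernel is then the Schur multiplier).          *)
Definition schur_cover (gT hT : finGroupType) (G : {set gT})
    (f : {morphism [set: hT] >-> gT}) : Prop :=
  stem_extension G f /\
  forall (hT' : finGroupType) (f' : {morphism [set: hT'] >-> gT}),
    stem_extension G f' -> #|'ker f'| <= #|'ker f|.

Definition deep_adj (gT hT : finGroupType) (f : {morphism [set: hT] >-> gT})
    (x y : gT) : bool :=
  (x != y) && [exists x' : hT, exists y' : hT,
     [&& f x' == x, f y' == y & x' * y' == y' * x']].

Definition dominant (T : finType) (V : {set T}) (e : rel T) (v : T) : bool :=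
  (v \in V) && [forall u in V, (u != v) ==> e v u].

Definition reduced_vertices (T : finType) (V : {set T}) (e : rel T) : {set T} :=
  [set v in V | ~~ dominant V e v].

Definition induced_rel (T : finType) (W : {set T}) (e : rel T) : rel T :=
  fun x y => [&& x \in W, y \in W & e x y].

Definition disconnected_on (T : finType) (W : {set T}) (e : rel T) : Prop :=
  exists x y, [/\ x \in W, y \in W & ~~ connect (induced_rel W e) x y].

(* In a stem extension f : K -> H of H = H_3(Z/nZ), n odd, with lifts y1, y2 of the
   generators, c = [y1, y2] and d_i = [c, y_i], every element of K is y1^a y2^b c^e
   times a central element of ker f, and ker f is generated by the central elements
   d1, d2 of order dividing n.  An explicit stem extension with kernel (Z/nZ)^2 shows
   that in a Schur cover d1 and d2 are independent.  Since [L(0,0,t), L(x)] =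
   d1^(x1 t) d2^(x2 t), the lifts of a central vertex (0,0,t) and of x commute iff n
   divides x1 t and x2 t; the identity is the only dominant vertex.  For n = p a path
   from a nontrivial central vertex only meets central vertices, so it never reaches
   (1,0,0).  For n = p^k with k >= 2 every vertex x is adjacent to x^p, whose first
   two coordinates are divisible by p, and all such vertices are adjacent to
   (0,0,p^(k-1)); hence the reduced graph is connected. *)

From HB Require Import structures.
From mathcomp Require Import all_boot all_algebra all_fingroup all_solvable.
From mathcomp Require Import ring zify.
Set Implicit Arguments. Unset Strict Implicit. Unset Printing Implicit Defensive.
Import GRing.Theory.

Section ZpArith.
Variable n : nat.
Hypothesis n_gt1 : 1 < n.

Lemma Zp_nat_eq0 i : ((i%:R : 'Z_n) == 0)%R = (n %| i).
Proof. by rewrite -val_eqE /= val_Zp_nat. Qed.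

Lemma Zp_dvdn_eq0 (a : 'Z_n) : (n %| a) = (a == 0)%R.
Proof. by rewrite -Zp_nat_eq0 natr_Zp. Qed.

Lemma Zp_natM p (a : 'Z_n) : (p%:R * a = (p * a)%N%:R)%R.
Proof. by rewrite natrM natr_Zp. Qed.

Lemma dvdn_Zp_natM p (a : 'Z_n) : p %| n -> p %| (p%:R * a)%R.
Proof.
by move=> p_n; rewrite Zp_natM val_Zp_nat // /dvdn (modn_dvdm _ p_n) modnMr.
Qed.

Lemma Zp_natM_eq0 p k (a : 'Z_n) :
  0 < p -> n = p ^ k.+1 -> (p%:R * a == 0)%R = (p ^ k %| a).
Proof.
move=> p_gt0 def_n; rewrite Zp_natM Zp_nat_eq0.
by move: (nat_of_ord a) => {}a; rewrite def_n expnS dvdn_pmul2l.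
Qed.

End ZpArith.

Section HeisenbergGroup.
Variable n : nat.
Local Open Scope group_scope.
Implicit Types (a b c t : 'Z_n) (x y z : heis n).

Definition heis_y1 : heis n := (1, 0, 0)%R.
Definition heis_y2 : heis n := (0, 1, 0)%R.
Definition heis_central t : heis n := (0, 0, t)%R.

Lemma heis_mulE a b c a' b' c' :
  ((a, b, c) : heis n) * ((a', b', c') : heis n) =
  ((a + a', b + b', c + c' + a * b')%R : heis n).
Proof. by []. Qed.

Lemma heis_invE a b c : ((a, b, c) : heis n)^-1 = ((- a, - b, - c + a * b)%R : heis n).
Proof. by []. Qed.

Lemma heis_oneE : (1 : heis n) = ((0, 0, 0)%R : heis n).
Proof. by []. Qed.

Lemma heis_expE a b c i : ((a, b, c) : heis n) ^+ i =
  ((i%:R * a, i%:R * b, i%:R * c + 'C(i, 2)%:R * a * b)%R : heis n).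
Proof.
elim: i => [|i IHi]; first by rewrite expg0 heis_oneE /= !mul0r !addr0.
by rewrite expgS IHi heis_mulE binS bin1 !natrD; congr (_, _, _); ring.
Qed.

Lemma heis_commE a b c a' b' c' :
  [~ ((a, b, c) : heis n), ((a', b', c') : heis n)] =
  heis_central (a * b' - a' * b)%R.
Proof. by rewrite /commg /conjg !heis_invE !heis_mulE; congr (_, _, _); ring. Qed.

Lemma heis_commuteP x y : commute x y <-> (x.1.1 * y.1.2 = y.1.1 * x.1.2)%R.
Proof.
case: x y => [[a b] c] [[a' b'] c']; rewrite /commute !heis_mulE /=.
split=> [/eqP | ->]; last by congr (_, _, _); ring.
rewrite !xpair_eqE => /andP[_ /eqP h].
by apply: (addrI (c + c')%R); rewrite h; ring.
Qed.

Lemma heis_class2 x y z : [~ x, y, z] = 1.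
Proof.
case: x y z => [[a b] c] [[a' b'] c'] [[a'' b''] c''].
by rewrite heis_commE heis_commE heis_oneE; congr (_, _, _); ring.
Qed.

Lemma heis_comm_y1y2 : [~ heis_y1, heis_y2] = heis_central 1%R.
Proof. by rewrite heis_commE mulr1 mul0r subr0. Qed.

Lemma heis_word a b e : heis_y1 ^+ a * heis_y2 ^+ b * heis_central 1%R ^+ e =
  ((a%:R, b%:R, a%:R * b%:R + e%:R)%R : heis n).
Proof. by rewrite !heis_expE !heis_mulE; congr (_, _, _); ring. Qed.

Lemma heis_expn x : 1 < n -> odd n -> x ^+ n = 1.
Proof.
case: x => [[a b] c] n_gt1 n_odd; rewrite heis_expE bin2odd // natrM pchar_Zp //.
by rewrite heis_oneE; congr (_, _, _); ring.
Qed.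

End HeisenbergGroup.

(* [(a, b, e, x, y)] stands for y1^a y2^b c^e d1^x d2^y, where c = [y1, y2] and
   the d_i = [c, y_i] are central.  Odd moduli are written [m.*2.+3], so that
   [half = (m + 2)%:R] inverts 2 in ['Z_n] and [binom2 a] is "a choose 2". *)
Definition heis_cover (m : nat) : Type :=
  ('Z_(m.*2.+3) * 'Z_(m.*2.+3) * 'Z_(m.*2.+3) * 'Z_(m.*2.+3) * 'Z_(m.*2.+3))%type.

Section HeisenbergCover.
Variable m : nat.
Local Notation n := m.*2.+3.
Local Open Scope ring_scope.
Implicit Types (s t : 'Z_n) (g : heis_cover m).

HB.instance Definition _ := Finite.copy (heis_cover m)
  ('Z_n * 'Z_n * 'Z_n * 'Z_n * 'Z_n)%type.

Definition half : 'Z_n := m.+2%:R.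
Definition binom2 s : 'Z_n := s * (s - 1) * half.

Lemma mul2_half : 2 * half = 1.
Proof. by rewrite -natrM (_ : (2 * m.+2 = n + 1)%N) ?natrD ?pchar_Zp ?add0r //; lia. Qed.

Lemma binom2D s t : binom2 (s + t) = binom2 s + binom2 t + s * t.
Proof.
have -> : binom2 (s + t) = binom2 s + binom2 t + s * t * (2 * half).
  by rewrite /binom2; ring.
by rewrite mul2_half mulr1.
Qed.

Lemma binom20 : binom2 0 = 0.
Proof. by rewrite /binom2 !mul0r. Qed.

Definition cover_mul g g' : heis_cover m :=
  let: (a, b, e, x, y) := g in let: (a', b', e', x', y') := g' in
  (a + a', b + b', e + e' - a' * b,
   x + x' + e * a' - b * binom2 a',
   y + y' + e * b' - a' * binom2 b - a' * b * b').
Definition cover_one : heis_cover m := (0, 0, 0, 0, 0).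
Definition cover_inv g : heis_cover m :=
  let: (a, b, e, x, y) := g in
  (- a, - b, - e - a * b,
   - x + (e + a * b) * a - b * binom2 a,
   - y + (e + a * b) * b + a * binom2 (- b) - a * b * b).

Lemma cover_mulA : associative cover_mul.
Proof.
move=> [[[[a b] e] x] y] [[[[a' b'] e'] x'] y'] [[[[a'' b''] e''] x''] y''] /=.
by rewrite !binom2D; congr (_, _, _, _, _); ring.
Qed.

Lemma cover_mul1 : left_id cover_one cover_mul.
Proof. by move=> [[[[a b] e] x] y] /=; rewrite binom20; congr (_, _, _, _, _); ring. Qed.

Lemma cover_mulV : left_inverse cover_one cover_inv cover_mul.
Proof. by move=> [[[[a b] e] x] y] /=; congr (_, _, _, _, _); ring. Qed.

HB.instance Definition _ :=
  Finite_isGroup.Build (heis_cover m) cover_mulA cover_mul1 cover_mulV.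

End HeisenbergCover.

Section CoverProjection.
Variable m : nat.
Local Notation n := m.*2.+3.
Local Open Scope group_scope.
Implicit Types (s t : 'Z_n) (g : heis_cover m).

Definition cover_proj g : heis n := let: (a, b, e, _, _) := g in (a, b, e + a * b)%R.

Lemma cover_projM : {morph cover_proj : g g' / g * g'}.
Proof.
move=> [[[[a b] e] x] y] [[[[a' b'] e'] x'] y'].
by rewrite /= heis_mulE; congr (_, _, _); ring.
Qed.

Definition cover_morphism : {morphism [set: heis_cover m] >-> heis n} :=
  Morphism (in2W cover_projM).

Definition cover_ker s t : heis_cover m := (0, 0, 0, s, t)%R.
Definition cover_y1 : heis_cover m := (1, 0, 0, 0, 0)%R.
Definition cover_y2 : heis_cover m := (0, 1, 0, 0, 0)%R.
Definition cover_c : heis_cover m := (0, 0, 1, 0, 0)%R.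

Lemma cover_mulE g g' : g * g' = cover_mul g g'.
Proof. by []. Qed.

Lemma cover_ker_central s t : cover_ker s t \in 'Z([set: heis_cover m]).
Proof.
apply/centerP; split=> [|[[[[a b] e] x] y] _]; first by rewrite inE.
by rewrite /commute !cover_mulE /= binom20; congr (_, _, _, _, _); ring.
Qed.

Lemma cover_kerM s t s' t' :
  cover_ker s t * cover_ker s' t' = cover_ker (s + s')%R (t + t')%R.
Proof. by rewrite cover_mulE /= binom20; congr (_, _, _, _, _); ring. Qed.

Lemma cover_ker_comm s t :
  cover_ker s t = [~ cover_c, cover_y1] ^+ s * [~ cover_c, cover_y2] ^+ t.
Proof.
have cX s' t' i : cover_ker s' t' ^+ i = cover_ker (i%:R * s')%R (i%:R * t')%R.
  elim: i => [|i IHi]; first by rewrite expg0 !mul0r.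
  by rewrite expgS IHi cover_kerM; congr (cover_ker _ _); rewrite -natr1; ring.
have -> : [~ cover_c, cover_y1] = cover_ker 1%R 0%R.
  by rewrite /commg /conjg !cover_mulE /= /binom2; congr (_, _, _, _, _); ring.
have -> : [~ cover_c, cover_y2] = cover_ker 0%R 1%R.
  by rewrite /commg /conjg !cover_mulE /= /binom2; congr (_, _, _, _, _); ring.
by rewrite !cX cover_kerM !natr_Zp !mulr1 !mulr0 addr0 add0r.
Qed.

Lemma cover_kerP g : reflect (exists s t, g = cover_ker s t) (g \in 'ker cover_morphism).
Proof.
apply: (iffP (kerP _ (in_setT g))) => [|[s [t ->]]]; last first.
  by rewrite /= heis_oneE; congr (_, _, _); ring.
case: g => [[[[a b] e] x] y] /= /eqP; rewrite heis_oneE !xpair_eqE.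
case/andP=> /andP[/eqP-> /eqP->]; rewrite mul0r addr0 => /eqP->.
by exists x, y.
Qed.

Lemma heis_cover_stem : stem_extension [set: heis n] cover_morphism.
Proof.
split.
  apply/eqP; rewrite eqEsubset subsetT morphimEdom; apply/subsetP=> -[[a b] c] _.
  apply/imsetP; exists ((a, b, c - a * b, 0, 0)%R : heis_cover m) => //.
  by rewrite /cover_morphism /=; congr (_, _, _); ring.
apply/subsetP=> _ /cover_kerP[s [t ->]]; rewrite inE cover_ker_central cover_ker_comm.
by rewrite groupM ?groupX ?mem_commg ?inE.
Qed.

Lemma card_ker_cover : (n * n <= #|'ker cover_morphism|)%N.
Proof.
rewrite -[X in (X * _)%N]card_ord -[X in (_ * X)%N]card_ord -card_prod.
rewrite -(card_imset _ (f := fun u : 'Z_n * 'Z_n => cover_ker u.1 u.2)); last first.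
  by move=> [s t] [s' t'] [-> ->].
apply/subset_leq_card/subsetP=> _ /imsetP[[s t] _ ->].
by apply/cover_kerP; exists s, t.
Qed.

End CoverProjection.

Lemma schur_cover_ker_card n (hT : finGroupType) (f : {morphism [set: hT] >-> heis n}) :
  odd n -> 1 < n -> schur_cover [set: heis n] f -> n * n <= #|('ker f)%g|.
Proof.
move=> odd_n n_gt1 [_ max_ker]; have [m def_n] : exists m, n = m.*2.+3.
  by exists n./2.-1; rewrite -[LHS]odd_double_half odd_n; lia.
subst n; exact: leq_trans (card_ker_cover m) (max_ker _ _ (heis_cover_stem m)).
Qed.

Section StemExtension.
Variables (n : nat) (hT : finGroupType) (f : {morphism [set: hT] >-> heis n}).
Hypotheses (n_odd : odd n) (n_gt1 : 1 < n) (f_stem : stem_extension [set: heis n] f).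
Local Open Scope group_scope.
Local Notation Z := 'Z([set: hT]).
Implicit Types u v w z : hT.

Lemma ker_stem_central : 'ker f \subset Z.
Proof. by case: f_stem => _ /subset_trans; apply; apply: subsetIl. Qed.

Lemma central_commute z w : z \in Z -> commute z w.
Proof. by case/centerP=> _; apply; rewrite inE. Qed.

Lemma central_conjg z w : z \in Z -> z ^ w = z.
Proof. by move/central_commute=> czw; rewrite conjgE czw mulKg. Qed.

Lemma conjg_central x z : z \in Z -> x ^ z = x.
Proof. by move/central_commute=> czx; rewrite conjgE -czx mulKg. Qed.

Lemma commg_central_mul u v z z' :
  z \in Z -> z' \in Z -> [~ u * z, v * z'] = [~ u, v].
Proof.
move=> Zz Zz'; rewrite commMgJ commgMJ.
have /commgP/eqP-> : commute z (v * z') by apply: central_commute.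
have /commgP/eqP-> : commute u z' by apply/commute_sym/central_commute.
by rewrite mulg1 mul1g !conjg_central.
Qed.

Lemma stem_class2 u v w : [~ u, v, w] \in 'ker f.
Proof. by apply/kerP; rewrite ?inE // !morphR ?inE // heis_class2. Qed.

Lemma stem_class2_central u v w : [~ u, v, w] \in Z.
Proof. exact: subsetP ker_stem_central _ (stem_class2 u v w). Qed.

Definition stem_lift (x : heis n) : hT := odflt 1 [pick u | f u == x].

Lemma stem_liftK x : f (stem_lift x) = x.
Proof.
have : x \in f @* [set: hT] by case: f_stem => ->; rewrite inE.
case/morphimP=> u _ _ ->; rewrite /stem_lift; case: pickP => [v /eqP // | nof].
by have := nof u; rewrite eqxx.
Qed.

Lemma stem_lift_ker u : (stem_lift (f u))^-1 * u \in 'ker f.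
Proof. by apply/kerP; rewrite ?inE // morphM ?inE // morphV ?inE // stem_liftK mulVg. Qed.

Lemma commg_stem_lift u v : [~ stem_lift (f u), stem_lift (f v)] = [~ u, v].
Proof.
have lift_ker w := subsetP ker_stem_central _ (stem_lift_ker w).
rewrite -{2}(mulKVg (stem_lift (f u)) u) -{2}(mulKVg (stem_lift (f v)) v).
by rewrite commg_central_mul ?lift_ker.
Qed.

Let y1 := stem_lift (heis_y1 n).
Let y2 := stem_lift (heis_y2 n).
Let c := [~ y1, y2].
Let d1 := [~ c, y1].
Let d2 := [~ c, y2].

Lemma stem_decomp u : exists2 k, k \in 'ker f &
  u = y1 ^+ (f u).1.1 * y2 ^+ (f u).1.2 * c ^+ ((f u).2 - (f u).1.1 * (f u).1.2)%R * k.
Proof.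
set w := _ * _ * _; exists (w^-1 * u); last by rewrite mulKVg.
apply/kerP; rewrite ?inE // morphM ?inE // morphV ?inE //.
suff -> : f w = f u by rewrite mulVg.
rewrite !morphM ?inE // !morphX ?inE // morphR ?inE // !stem_liftK heis_comm_y1y2.
by rewrite heis_word !natr_Zp; case: (f u) => [[a b] e] /=; congr (_, _, _); ring.
Qed.

Lemma stem_ind (P : hT -> Prop) :
  P 1 -> (forall u v, P u -> P v -> P (u * v)) -> P y1 -> P y2 -> P c ->
  {in 'ker f, forall k, P k} -> forall u, P u.
Proof.
move=> P1 PM Py1 Py2 Pc Pker u.
have PX v i : P v -> P (v ^+ i).
  by move=> Pv; elim: i => // i; rewrite expgS; apply: PM.
have [k /Pker Pk ->] := stem_decomp u.
exact: PM _ _ (PM _ _ (PM _ _ (PX _ _ Py1) (PX _ _ Py2)) (PX _ _ Pc)) Pk.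
Qed.

Lemma commg_cM u v : [~ c, u * v] = [~ c, u] * [~ c, v].
Proof.
by rewrite commgMJ central_conjg ?stem_class2_central // central_commute ?stem_class2_central.
Qed.

Lemma commg_cX u i : [~ c, u ^+ i] = [~ c, u] ^+ i.
Proof. by apply/commgX/commute_sym/central_commute/stem_class2_central. Qed.

Lemma commg_c u : [~ c, u] = d1 ^+ (f u).1.1 * d2 ^+ (f u).1.2.
Proof.
have [k Kk {1}->] := stem_decomp u; rewrite !commg_cM !commg_cX commgg expg1n.
have /commgP/eqP-> : commute c k.
  exact/commute_sym/central_commute/(subsetP ker_stem_central).
by rewrite !mulg1.
Qed.

Lemma d1_central : d1 \in Z. Proof. exact: stem_class2_central. Qed.
Lemma d2_central : d2 \in Z. Proof. exact: stem_class2_central. Qed.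

Lemma expn_central u : u ^+ n \in Z.
Proof.
apply: (subsetP ker_stem_central); apply/kerP; first by rewrite inE.
by rewrite morphX ?inE // heis_expn.
Qed.

Lemma commg_expn_central u v : [~ u, v ^+ n] = 1.
Proof. exact/eqP/commgP/commute_sym/central_commute/expn_central. Qed.

Lemma d1_expn : d1 ^+ n = 1.
Proof. by rewrite -commg_cX commg_expn_central. Qed.

Lemma d2_expn : d2 ^+ n = 1.
Proof. by rewrite -commg_cX commg_expn_central. Qed.

Lemma commg_y1_expy2 i : [~ y1, y2 ^+ i] = c ^+ i * d2 ^+ 'C(i, 2).
Proof.
elim: i => [|i IHi]; first by rewrite !expg0 commg1 mulg1.
rewrite expgSr commgMJ IHi conjMg !conjXg conjg_mulR (central_conjg _ d2_central).
rewrite expgMn; last exact/commute_sym/central_commute/d2_central.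
by rewrite binS bin1 addnC expgD !mulgA -expgS -mulgA.
Qed.

Lemma c_expn : c ^+ n = 1.
Proof.
have := commg_y1_expy2 n; rewrite commg_expn_central bin2odd // expgM.
by rewrite d2_expn expg1n mulg1.
Qed.

Let span := <[c]> <*> <[d1]> <*> <[d2]>.

Lemma central_cycle_cent z (A : {set hT}) : z \in Z -> <[z]> \subset 'C(A).
Proof. by case/setIP=> _ Cz; rewrite cycle_subG (subsetP (centS (subsetT A))). Qed.

Lemma spanP x : x \in span -> exists i j l, x = c ^+ i * d1 ^+ j * d2 ^+ l.
Proof.
rewrite /span (cent_joinEr (G := (<[c]> <*> <[d1]>)%G)) ?central_cycle_cent ?d2_central //=.
rewrite (cent_joinEr (G := <[c]>%G)) ?central_cycle_cent ?d1_central //.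
case/mulsgP=> _ _ /mulsgP[_ _ /cycleP[i ->] /cycleP[j ->] ->] /cycleP[l ->] ->.
by exists i, j, l.
Qed.

Lemma c_in_span : c \in span.
Proof. by rewrite !(subsetP (joing_subl _ _)) ?cycle_id. Qed.

Lemma d1_in_span : d1 \in span.
Proof. by rewrite (subsetP (joing_subl _ _)) // (subsetP (joing_subr _ _)) ?cycle_id. Qed.

Lemma d2_in_span : d2 \in span.
Proof. by rewrite (subsetP (joing_subr _ _)) ?cycle_id. Qed.

Lemma commg_c_in_span u : [~ c, u] \in span.
Proof. by rewrite commg_c groupM ?groupX ?d1_in_span ?d2_in_span. Qed.

Lemma memJ_span x w : x \in span -> x ^ w \in span.
Proof.
case/spanP=> i [j [l ->]]; rewrite !conjMg !conjXg !(central_conjg _ (d1_central)).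
rewrite (central_conjg _ d2_central) conjg_mulR expgMn; last first.
  exact/commute_sym/central_commute/stem_class2_central.
by rewrite !groupM ?groupX ?c_in_span ?d1_in_span ?d2_in_span ?commg_c_in_span.
Qed.

Lemma commg_in_span_gen u :
  [~ u, y1] \in span -> [~ u, y2] \in span -> [~ u, c] \in span ->
  forall v, [~ u, v] \in span.
Proof.
move=> sy1 sy2 sc; elim/stem_ind => //; first by rewrite commg1.
  by move=> v w sv sw; rewrite commgMJ groupM ?memJ_span.
move=> k /(subsetP ker_stem_central)/central_commute/commute_sym/commgP/eqP->.
exact: group1.
Qed.

Lemma commg_in_span u v : [~ u, v] \in span.
Proof.
have sy1 w : [~ y1, w] \in span.
  apply: commg_in_span_gen; rewrite ?commgg ?group1 ?c_in_span //.
  by rewrite -invg_comm groupV d1_in_span.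
have sy2 w : [~ y2, w] \in span.
  apply: commg_in_span_gen; rewrite ?commgg ?group1 //.
    by rewrite -invg_comm groupV c_in_span.
  by rewrite -invg_comm groupV d2_in_span.
have sc w : [~ c, w] \in span by apply: commg_c_in_span.
by apply: commg_in_span_gen; rewrite -invg_comm groupV.
Qed.

Lemma ker_stem_sub_span : 'ker f \subset span.
Proof.
case: f_stem => _ /subset_trans; apply; rewrite subIset // gen_subG.
by apply/orP; right; apply/subsetP=> _ /imset2P[u v _ _ ->]; apply: commg_in_span.
Qed.

Lemma ker_stem_form k : k \in 'ker f -> exists j l, k = d1 ^+ j * d2 ^+ l.
Proof.
move=> Kk; have /spanP[i [j [l def_k]]] := subsetP ker_stem_sub_span k Kk.
exists j, l; rewrite def_k.
have /eqP : f k = 1 by apply: mker.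
rewrite def_k !morphM ?inE // !morphX ?inE // (mker (stem_class2 _ _ _)) ?expg1n.
rewrite (mker (stem_class2 _ _ _)) expg1n !mulg1 morphR ?inE // !stem_liftK.
rewrite heis_comm_y1y2 heis_expE heis_oneE !mulr0 mulr1 addr0 !xpair_eqE /= Zp_nat_eq0 //.
by move/dvdnP=> [q ->]; rewrite mulnC expgM c_expn expg1n mul1g.
Qed.

Lemma commg_lift_central t u : [~ stem_lift (heis_central t), u] =
  d1 ^+ ((f u).1.1 * t)%N * d2 ^+ ((f u).1.2 * t)%N.
Proof.
have [k /(subsetP ker_stem_central) Zk ->] := stem_decomp (stem_lift (heis_central t)).
rewrite stem_liftK [(heis_central t).1.1]/= [(heis_central t).1.2]/= [(heis_central t).2]/=.
rewrite mul0r subr0 !expg0 !mul1g commMgJ conjg_central //.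
have /commgP/eqP-> : commute k u by apply: central_commute.
rewrite mulg1 commXg; last exact/commute_sym/central_commute/stem_class2_central.
rewrite commg_c expgMn ?expgM //; exact/commute_sym/central_commute/groupX/d2_central.
Qed.

Section SchurCover.
Hypothesis ker_big : (n * n <= #|'ker f|)%N.

Lemma schur_d_indep j l : d1 ^+ j * d2 ^+ l = 1 -> (n %| j)%N && (n %| l)%N.
Proof.
have n_gt0 : (0 < n)%N by apply: ltnW.
pose dd (jl : 'I_n * 'I_n) := d1 ^+ jl.1 * d2 ^+ jl.2.
have dd_inj : {in [set: 'I_n * 'I_n] &, injective dd}.
  apply/imset_injP; rewrite eqn_leq leq_imset_card cardsT card_prod card_ord.
  apply: leq_trans ker_big (subset_leq_card _); apply/subsetP=> k /ker_stem_form[j' [l' ->]].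
  apply/imsetP; exists (Ordinal (ltn_pmod j' n_gt0), Ordinal (ltn_pmod l' n_gt0)) => //.
  by rewrite /dd /= !expg_mod ?d1_expn ?d2_expn.
move=> djl; have := @dd_inj (Ordinal (ltn_pmod j n_gt0), Ordinal (ltn_pmod l n_gt0))
  (Ordinal n_gt0, Ordinal n_gt0).
rewrite !inE /dd /= !expg_mod ?d1_expn ?d2_expn // djl !expg0 mulg1 => /(_ isT isT erefl).
by case=> /eqP j0 /eqP l0; rewrite /dvdn j0 l0.
Qed.

Lemma commg_lift_central_eq1 t x :
  ([~ stem_lift (heis_central t), stem_lift x] == 1) =
  (n %| x.1.1 * t)%N && (n %| x.1.2 * t)%N.
Proof.
rewrite commg_lift_central stem_liftK; apply/eqP/idP; first exact: schur_d_indep.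
case/andP=> /eqP dvd1 /eqP dvd2.
by rewrite -(expg_mod _ d1_expn) -(expg_mod _ d2_expn) dvd1 dvd2 mulg1.
Qed.

End SchurCover.

End StemExtension.

Lemma induced_rel_sym (T : finType) (W : {set T}) (e : rel T) :
  symmetric e -> symmetric (induced_rel W e).
Proof. by move=> e_sym x y; rewrite /induced_rel e_sym andbCA. Qed.

Section DeepCommutingGraph.
Variables (n : nat) (hT : finGroupType) (f : {morphism [set: hT] >-> heis n}).
Hypotheses (n_odd : odd n) (n_gt1 : 1 < n) (f_cover : schur_cover [set: heis n] f).
Local Open Scope group_scope.
Implicit Types (t : 'Z_n) (x y u : heis n).

Local Notation e := (deep_adj f).
Local Notation W := (reduced_vertices [set: heis n] (deep_adj f)).
Local Notation R := (induced_rel W (deep_adj f)).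
Local Notation L := (stem_lift f).

Let f_stem : stem_extension [set: heis n] f := proj1 f_cover.
Let ker_big := schur_cover_ker_card n_odd n_gt1 f_cover.

Lemma deep_adjE x y : e x y = (x != y) && ([~ L x, L y] == 1).
Proof.
rewrite /deep_adj; congr andb; apply/existsP/idP=> [[u /existsP[v]] | /eqP cxy].
  by case/and3P=> /eqP<- /eqP<- /eqP cuv; rewrite commg_stem_lift //; apply/commgP.
exists (L x); apply/existsP; exists (L y); rewrite !stem_liftK // !eqxx /=.
by move/eqP/commgP: cxy => /eqP.
Qed.

Lemma deep_adj_sym : symmetric e.
Proof. by move=> x y; rewrite !deep_adjE eq_sym -invg_comm eq_invg1. Qed.

Lemma deep_adj_commute x y : e x y -> commute x y.
Proof.
rewrite deep_adjE => /andP[_ /eqP/(congr1 f)]; rewrite morphR ?inE // !stem_liftK //.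
by rewrite morph1 => /eqP/commgP.
Qed.

Lemma deep_adj_central t x :
  e (heis_central t) x = (x != heis_central t) && (n %| x.1.1 * t)%N && (n %| x.1.2 * t)%N.
Proof. by rewrite deep_adjE eq_sym commg_lift_central_eq1 // andbA. Qed.

Lemma deep_adj_expg x i : x != x ^+ i -> e x (x ^+ i).
Proof.
rewrite deep_adjE => -> /=; have := commg_stem_lift f_stem (L x) (L x ^+ i).
by rewrite morphX ?inE // stem_liftK // commgXg => ->.
Qed.

Lemma lift1_dominant : dominant [set: heis n] e 1.
Proof.
rewrite /dominant inE; apply/forall_inP=> u _; apply/implyP=> u_neq1.
rewrite deep_adjE eq_sym u_neq1 /=; apply/commgP/central_commute.
apply: (subsetP (ker_stem_central f_stem)); by apply/kerP; rewrite ?inE // (stem_liftK f_stem).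
Qed.

Lemma nondominant x : x != 1 -> exists2 u, u != x & ~~ e x u.
Proof.
case: x => [[a b] t] x_neq1.
have [a0 | a_neq0] := eqVneq a 0%R; first have [b0 | b_neq0] := eqVneq b 0%R.
- have t_neq0 : t != 0%R by apply: contraNneq x_neq1; rewrite a0 b0 => ->.
  subst a b; exists (heis_y1 n); first by apply: contraNneq t_neq0; case.
  change (~~ e (heis_central t) (heis_y1 n)).
  by rewrite deep_adj_central /= mul1n Zp_dvdn_eq0 // (negbTE t_neq0).
- exists (heis_y1 n); first by apply: contraNneq b_neq0; case=> _ <-.
  apply: contra b_neq0 => /deep_adj_commute/heis_commuteP /=.
  by rewrite mulr0 mul1r => <-.
- exists (heis_y2 n); first by apply: contraNneq a_neq0; case=> <-.
  apply: contra a_neq0 => /deep_adj_commute/heis_commuteP /=.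
  by rewrite mulr1 mul0r => ->.
Qed.

Lemma reduced_verticesE : W = [set~ 1].
Proof.
apply/setP=> x; rewrite !inE; have [-> | x_neq1] := eqVneq x 1.
  by rewrite lift1_dominant.
have [u u_neq_x not_xu] := nondominant x_neq1.
rewrite /dominant inE negb_forall; apply/existsP; exists u.
by rewrite inE u_neq_x (negbTE not_xu).
Qed.

Lemma deep_adj_central_prime t x :
  prime n -> t != 0%R -> e (heis_central t) x -> x = heis_central x.2.
Proof.
move=> n_pr t_neq0; rewrite deep_adj_central -Zp_dvdn_eq0 // in t_neq0 *.
rewrite !Euclid_dvdM // (negbTE t_neq0) !orbF !Zp_dvdn_eq0 //.
case/andP=> /andP[_ /eqP a0] /eqP b0.
by case: x a0 b0 => [[a b] s] /= -> ->.
Qed.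

Lemma reduced_disconnected_prime : prime n -> disconnected_on W e.
Proof.
move=> n_pr; pose central := [pred x : heis n | x == heis_central x.2].
have R_sym := induced_rel_sym W deep_adj_sym.
have R_csym := sym_connect_sym R_sym.
have central_closed : closed R central.
  apply: (intro_closed R_csym) => x y /and3P[].
  rewrite reduced_verticesE !inE => x_neq1 _ e_xy /eqP def_x; apply/eqP.
  rewrite def_x in e_xy; apply: deep_adj_central_prime n_pr _ e_xy.
  by apply: contraNneq x_neq1 => x2_0; rewrite def_x x2_0.
exists (heis_central 1%R), (heis_y1 n); split.
- by rewrite reduced_verticesE !inE heis_oneE !xpair_eqE oner_eq0 andbF.
- by rewrite reduced_verticesE !inE heis_oneE !xpair_eqE oner_eq0.
by apply/negP => /(closed_connect central_closed); rewrite !inE eqxx !xpair_eqE oner_eq0.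
Qed.

Section PrimePowerModulus.
Variables p k : nat.
Hypotheses (p_pr : prime p) (def_n : n = (p ^ k.+1)%N) (k_gt0 : 0 < k).

Let hub : heis n := heis_central (p ^ k)%N%:R%R.

Lemma hub_in_reduced : hub \in W.
Proof.
rewrite reduced_verticesE !inE heis_oneE !xpair_eqE Zp_nat_eq0 // def_n.
by rewrite dvdn_Pexp2l ?prime_gt1 // ltnn.
Qed.

Lemma connect_hub_dvd x : x \in W -> p %| x.1.1 -> p %| x.1.2 -> connect R x hub.
Proof.
move=> xW p_a p_b; have [-> // | x_neq_hub] := eqVneq x hub.
have hub_val : nat_of_ord ((p ^ k)%N%:R : 'Z_n)%R = (p ^ k)%N.
  by rewrite val_Zp_nat // modn_small // def_n ltn_exp2l ?prime_gt1.
have n_dvd a : (p %| a -> n %| a * p ^ k)%N.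
  by rewrite def_n expnS => p_div; apply: dvdn_mul p_div (dvdnn _).
apply: connect1; rewrite /induced_rel xW hub_in_reduced deep_adj_sym deep_adj_central.
by rewrite x_neq_hub hub_val !n_dvd.
Qed.

Lemma expp_dvd x : (p %| (x ^+ p).1.1) && (p %| (x ^+ p).1.2).
Proof.
have p_n : (p %| n)%N by rewrite def_n dvdn_exp.
by case: x => [[a b] t]; rewrite heis_expE; apply/andP; split; apply: dvdn_Zp_natM.
Qed.

Lemma expp_in_reduced x : ~~ ((p %| x.1.1) && (p %| x.1.2)) -> x ^+ p \in W.
Proof.
rewrite reduced_verticesE !inE; apply: contraNneq => xp1.
have : ((x ^+ p).1.1 == 0%R) && ((x ^+ p).1.2 == 0%R) by rewrite xp1.
have p_dvd : (p %| p ^ k)%N by rewrite dvdn_exp.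
case: x {xp1} => [[a b] t]; rewrite heis_expE => /andP[].
rewrite !(Zp_natM_eq0 n_gt1 _ (prime_gt0 p_pr) def_n) => /(dvdn_trans p_dvd) -> /=.
exact: dvdn_trans.
Qed.

Lemma connect_hub x : x \in W -> connect R x hub.
Proof.
move=> xW; have [/andP[] | not_dvd] := boolP ((p %| x.1.1) && (p %| x.1.2)).
  exact: connect_hub_dvd.
have x_neq_xp : x != x ^+ p by apply: contraNneq not_dvd => ->; apply: expp_dvd.
have xpW := expp_in_reduced not_dvd; have /andP[p_a p_b] := expp_dvd x.
apply: connect_trans (connect1 _) (connect_hub_dvd xpW p_a p_b).
by rewrite /induced_rel xW xpW deep_adj_expg.
Qed.

Lemma reduced_connected_prime_power : ~ disconnected_on W e.
Proof.
have R_csym := sym_connect_sym (induced_rel_sym W deep_adj_sym).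
move=> [x [y [xW yW /negP]]]; apply; apply: connect_trans (connect_hub xW) _.
by rewrite R_csym connect_hub.
Qed.

End PrimePowerModulus.

End DeepCommutingGraph.

Theorem proposition5p6 (p k : nat) :
  prime p -> odd p -> 0 < k ->
  forall (hT : finGroupType) (f : {morphism [set: hT] >-> H3 p k}),
    schur_cover [set: H3 p k] f ->
    (disconnected_on (reduced_vertices [set: H3 p k] (deep_adj f)) (deep_adj f)
     <-> k = 1).
Proof.
move=> p_pr p_odd k_gt0 hT f f_cover.
have n_odd : odd (p ^ k) by rewrite oddX p_odd orbT.
have n_gt1 : 1 < p ^ k by rewrite -(expn0 p) ltn_exp2l // prime_gt1.
split=> [disc | k1].
  have [k_lt1 | k_gt1 | //] := ltngtP k 1; first lia.
  have def_n : p ^ k = p ^ k.-1.+1 by rewrite prednK // ltnW.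
  have k'_gt0 : 0 < k.-1 by lia.
  by case: (reduced_connected_prime_power n_odd n_gt1 f_cover p_pr def_n k'_gt0).
apply: (reduced_disconnected_prime n_odd n_gt1 f_cover).
by rewrite k1 expn1.
Qed.
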